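(* Let $K\ge2$, $0\le\beta_k\le1$ and $0<\varpi<2$. Let $X,Y$ be random variables on $K$-letter alphabets $\{x_1,\dots,x_K\}$, $\{y_1,\dots,y_K\}$ whose joint law is $p(y_j)p(x_i\mid y_j)$, where $p(y)$ ranges over all distributions on $\{y_1,\dots,y_K\}$ and the backward matrix is fixed as $p(x_i\mid y_i)=1-\beta_k$ and $p(x_i\mid y_j)=\beta_k/(K-1)$ for $i\ne j$. Then $$\max\big\{L(\varpi,X)-L(\varpi,X\mid Y)\big\}=e^{\varpi(K-1)/K}-\Big((1-\beta_k)e^{\varpi\beta_k}+\beta_k e^{\varpi\left(1-\frac{\beta_k}{K-1}\right)}\Big),$$ where the maximum is over the distributions $p(y)$ (equivalently over the induced input distributions $p(x_i)=\sum_j p(y_j)p(x_i\mid y_j)$), and it is attained when $X$ (equivalently $Y$) is uniform.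
   Context: For a discrete random variable $X$ with distribution $\{p(x_1),\dots,p(x_n)\}$ the message importance measure (MIM) is $L(\varpi,X)=\sum_i p(x_i)e^{\varpi(1-p(x_i))}$. For a pair $(X,Y)$ the conditional message importance measure (CMIM) is $L(\varpi,X\mid Y)=\sum_{j:\,p(y_j)>0} p(y_j)\sum_i p(x_i\mid y_j)e^{\varpi(1-p(x_i\mid y_j))}$. *)

From Stdlib Require Import Reals Lra.
Open Scope R_scope.

Fixpoint rsum (n : nat) (f : nat -> R) : R :=
  match n with
  | O => 0
  | S m => rsum m f + f m
  end.

Definition is_dist (K : nat) (p : nat -> R) : Prop :=
  (forall i, (i < K)%nat -> 0 <= p i) /\ rsum K p = 1.

Definition MIM (w : R) (K : nat) (p : nat -> R) : R :=
  rsum K (fun i => p i * exp (w * (1 - p i))).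

(* conditional MIM L(w, X | Y); W i j = p(x_i | y_j), py j = p(y_j) *)
Definition CMIM (w : R) (K : nat) (py : nat -> R) (W : nat -> nat -> R) : R :=
  rsum K (fun j =>
    if Rlt_dec 0 (py j) then py j * rsum K (fun i => W i j * exp (w * (1 - W i j)))
    else 0).

Definition marg (K : nat) (py : nat -> R) (W : nat -> nat -> R) : nat -> R :=
  fun i => rsum K (fun j => py j * W i j).

Definition symW (K : nat) (beta : R) : nat -> nat -> R :=
  fun i j => if Nat.eqb i j then 1 - beta else beta / INR (K - 1).

Definition unif (K : nat) : nat -> R := fun _ => / INR K.

Definition mim_gap (w : R) (K : nat) (beta : R) (py : nat -> R) : R :=
  MIM w K (marg K py (symW K beta)) - CMIM w K py (symW K beta).

(* Every column of the symmetric channel is a permutation of the same values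
   (one [1 - beta] and [K - 1] copies of [beta / (K - 1)]), so [L(w, X | Y)]
   does not depend on [p(y)].  It therefore suffices to maximise [L(w, X)]
   over distributions on [K] letters.  For [w <= K] the map
   [p |-> p exp(w (1 - p))] lies below its tangent line at [1/K] on all of
   [p >= 0]; summing the tangent bound over a distribution gives
   [L(w, X) <= exp(w (1 - 1/K))], with equality at the uniform law, which is
   what the uniform [p(y)] induces. *)
From Stdlib Require Import Reals Lra Lia.
Open Scope R_scope.

Lemma rsum_ext n f g :
  (forall i, (i < n)%nat -> f i = g i) -> rsum n f = rsum n g.
Proof.
  induction n as [|n IH]; intros Hfg; simpl; [reflexivity|].
  rewrite IH by (intros; apply Hfg; lia).
  rewrite (Hfg n) by lia. reflexivity.
Qed.

Lemma rsum_le n f g :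
  (forall i, (i < n)%nat -> f i <= g i) -> rsum n f <= rsum n g.
Proof.
  induction n as [|n IH]; intros Hfg; simpl; [lra|].
  assert (rsum n f <= rsum n g) by (apply IH; intros; apply Hfg; lia).
  assert (f n <= g n) by (apply Hfg; lia).
  lra.
Qed.

Lemma rsum_const n c : rsum n (fun _ => c) = INR n * c.
Proof. induction n as [|n IH]; simpl rsum; [simpl; ring|]. rewrite IH, S_INR; ring. Qed.

Lemma rsum_nonneg n f : (forall i, (i < n)%nat -> 0 <= f i) -> 0 <= rsum n f.
Proof.
  intros Hf. rewrite <- (Rmult_0_r (INR n)), <- rsum_const. now apply rsum_le.
Qed.

Lemma rsum_plus n f g : rsum n (fun i => f i + g i) = rsum n f + rsum n g.
Proof. induction n as [|n IH]; simpl; [ring|]. rewrite IH; ring. Qed.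

Lemma rsum_mulr n f c : rsum n (fun i => f i * c) = rsum n f * c.
Proof. induction n as [|n IH]; simpl; [ring|]. rewrite IH; ring. Qed.

Lemma rsum_mull n c f : rsum n (fun i => c * f i) = c * rsum n f.
Proof.
  rewrite Rmult_comm, <- rsum_mulr. apply rsum_ext; intros; ring.
Qed.

Lemma rsum_swap n m (F : nat -> nat -> R) :
  rsum n (fun i => rsum m (fun j => F i j))
  = rsum m (fun j => rsum n (fun i => F i j)).
Proof.
  induction n as [|n IH]; simpl.
  - rewrite rsum_const; ring.
  - rewrite IH, <- rsum_plus. reflexivity.
Qed.

Lemma rsum_diag n j A B : (j < n)%nat ->
  rsum n (fun i => if Nat.eqb i j then A else B) = A + INR (n - 1) * B.
Proof.
  induction n as [|n IH]; intros Hj; [lia|]. simpl rsum.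
  destruct (Nat.eq_dec j n) as [->|Hne].
  - rewrite Nat.eqb_refl.
    replace (S n - 1)%nat with n by lia.
    rewrite (rsum_ext n _ (fun _ => B)), rsum_const; [ring|].
    intros i Hi. destruct (Nat.eqb_spec i n); [lia|reflexivity].
  - rewrite IH by lia.
    destruct (Nat.eqb_spec n j); [lia|].
    replace (S n - 1)%nat with (S (n - 1)) by lia.
    rewrite S_INR; ring.
Qed.

Lemma exp_tangent_bound a w p : 0 < a -> 0 < w -> a * w <= 1 -> 0 <= p ->
  p * exp (w * (1 - p))
  <= exp (w * (1 - a)) * (a + (1 - w * a) * (p - a)).
Proof.
  intros Ha Hw Haw Hp.
  set (u := w * (p - a)).
  assert (Hshift : exp (w * (1 - p)) * exp u = exp (w * (1 - a))).
  { rewrite <- exp_plus. f_equal. unfold u; ring. }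
  assert (Hexp : 1 + u <= exp u).
  { destruct (Req_dec u 0) as [->|Hu]; [rewrite exp_0; lra|].
    left; now apply exp_ineq1. }
  (* The tangent value is [p - a u], and [(p - a u)(1 + u) - p = w (p - a)^2 (1 - a w) >= 0]. *)
  assert (Hline : a + (1 - w * a) * (p - a) = p - a * u) by (unfold u; ring).
  assert (Hline_nonneg : 0 <= p - a * u).
  { replace (p - a * u) with (p * (1 - a * w) + a * a * w) by (unfold u; ring).
    assert (0 <= p * (1 - a * w)) by (apply Rmult_le_pos; lra).
    assert (0 <= a * a * w) by (apply Rmult_le_pos; [nra|lra]).
    lra. }
  assert (Hgap : p <= (p - a * u) * (1 + u)).
  { assert (0 <= w * ((p - a) * (p - a)) * (1 - a * w)).
    { apply Rmult_le_pos; [apply Rmult_le_pos; [lra|apply Rle_0_sqr]|lra]. }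
    replace ((p - a * u) * (1 + u))
      with (p + w * ((p - a) * (p - a)) * (1 - a * w)) by (unfold u; ring).
    lra. }
  assert (Hgrowth : p <= (p - a * u) * exp u).
  { eapply Rle_trans; [exact Hgap|]. now apply Rmult_le_compat_l. }
  rewrite Hline, <- Hshift, (Rmult_comm (exp (w * (1 - p)))), Rmult_assoc,
    (Rmult_comm (exp (w * (1 - p)))), <- Rmult_assoc, (Rmult_comm (exp u)).
  apply Rmult_le_compat_r; [left; apply exp_pos|exact Hgrowth].
Qed.

Lemma MIM_le_uniform w K p : (0 < K)%nat -> 0 < w <= INR K -> is_dist K p ->
  MIM w K p <= exp (w * (1 - / INR K)).
Proof.
  intros HK Hw [Hp Hsum].
  assert (HKpos : 0 < INR K) by (apply lt_0_INR; lia).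
  set (a := / INR K).
  assert (Ha : 0 < a) by (apply Rinv_0_lt_compat; lra).
  assert (Haw : a * w <= 1).
  { unfold a. apply (Rmult_le_reg_l (INR K)); [lra|].
    rewrite <- Rmult_assoc, Rinv_r by lra. lra. }
  unfold MIM. eapply Rle_trans.
  - apply rsum_le. intros i Hi. apply (exp_tangent_bound a w); auto; lra.
  - rewrite rsum_mull, rsum_plus, rsum_const, rsum_mull, <- (rsum_const K a).
    rewrite (rsum_ext K (fun i => p i - a) (fun i => p i + - a)) by (intros; ring).
    rewrite rsum_plus, !rsum_const, Hsum.
    right. unfold a. field. lra.
Qed.

Lemma MIM_unif w K : (0 < K)%nat -> MIM w K (unif K) = exp (w * (1 - / INR K)).
Proof.
  intros HK. assert (0 < INR K) by (apply lt_0_INR; lia).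
  unfold MIM, unif. rewrite rsum_const. field. lra.
Qed.

Lemma unif_dist K : (0 < K)%nat -> is_dist K (unif K).
Proof.
  intros HK. assert (0 < INR K) by (apply lt_0_INR; lia).
  split.
  - intros i _. left. now apply Rinv_0_lt_compat.
  - unfold unif. rewrite rsum_const. field. lra.
Qed.

Lemma marg_dist K py W : is_dist K py ->
  (forall i j, (i < K)%nat -> (j < K)%nat -> 0 <= W i j) ->
  (forall j, (j < K)%nat -> rsum K (fun i => W i j) = 1) ->
  is_dist K (marg K py W).
Proof.
  intros [Hpy Hsum] HW Hcol. split.
  - intros i Hi. apply rsum_nonneg. intros j Hj. apply Rmult_le_pos; auto.
  - unfold marg. rewrite rsum_swap, <- Hsum. apply rsum_ext. intros j Hj.
    now rewrite rsum_mull, Hcol, Rmult_1_r.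
Qed.

Lemma marg_unif K W i :
  rsum K (W i) = 1 -> marg K (unif K) W i = unif K i.
Proof.
  intros Hrow. unfold marg, unif. now rewrite rsum_mull, Hrow, Rmult_1_r.
Qed.

Lemma CMIM_const_columns w K py W C : is_dist K py ->
  (forall j, (j < K)%nat -> rsum K (fun i => W i j * exp (w * (1 - W i j))) = C) ->
  CMIM w K py W = C.
Proof.
  intros [Hpy Hsum] Hcol. unfold CMIM.
  rewrite (rsum_ext K _ (fun j => py j * C)).
  - now rewrite rsum_mulr, Hsum, Rmult_1_l.
  - intros j Hj. rewrite Hcol by exact Hj.
    destruct (Rlt_dec 0 (py j)); [reflexivity|].
    replace (py j) with 0 by (specialize (Hpy j Hj); lra). ring.
Qed.

Section SymmetricChannel.

Variables (K : nat) (beta : R).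

Lemma rsum_symW_col (g : R -> R) j : (j < K)%nat ->
  rsum K (fun i => g (symW K beta i j))
  = g (1 - beta) + INR (K - 1) * g (beta / INR (K - 1)).
Proof.
  intros Hj. rewrite <- (rsum_diag K j) by exact Hj.
  apply rsum_ext. intros i _. unfold symW. now destruct (Nat.eqb i j).
Qed.

Lemma rsum_symW_row (g : R -> R) i : (i < K)%nat ->
  rsum K (fun j => g (symW K beta i j))
  = g (1 - beta) + INR (K - 1) * g (beta / INR (K - 1)).
Proof.
  intros Hi. rewrite <- (rsum_symW_col g i Hi).
  apply rsum_ext. intros j _. unfold symW. now rewrite Nat.eqb_sym.
Qed.

Hypothesis HK : (2 <= K)%nat.

Let INR_pred_pos : 0 < INR (K - 1).
Proof. apply lt_0_INR. lia. Qed.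

Lemma symW_nonneg i j : 0 <= beta <= 1 -> 0 <= symW K beta i j.
Proof.
  intros Hb. unfold symW. destruct (Nat.eqb i j); [lra|].
  apply Rmult_le_pos; [lra|]. left. now apply Rinv_0_lt_compat.
Qed.

Lemma rsum_symW_col_1 j : (j < K)%nat -> rsum K (fun i => symW K beta i j) = 1.
Proof.
  intros Hj. rewrite (rsum_symW_col (fun x => x) j Hj). field. lra.
Qed.

Lemma rsum_symW_row_1 i : (i < K)%nat -> rsum K (fun j => symW K beta i j) = 1.
Proof.
  intros Hi. rewrite (rsum_symW_row (fun x => x) i Hi). field. lra.
Qed.

Lemma CMIM_symW w py : is_dist K py ->
  CMIM w K py (symW K beta)
  = (1 - beta) * exp (w * beta) + beta * exp (w * (1 - beta / INR (K - 1))).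
Proof.
  intros Hpy. apply CMIM_const_columns; [exact Hpy|].
  intros j Hj. rewrite (rsum_symW_col (fun x => x * exp (w * (1 - x)))) by exact Hj.
  replace (1 - (1 - beta)) with beta by ring.
  field. lra.
Qed.

End SymmetricChannel.

Theorem proposition3 (K : nat) (beta w : R) :
  (2 <= K)%nat -> 0 <= beta <= 1 -> 0 < w < 2 ->
  (forall py : nat -> R, is_dist K py ->
     mim_gap w K beta py <=
       exp (w * INR (K - 1) / INR K)
       - ((1 - beta) * exp (w * beta)
          + beta * exp (w * (1 - beta / INR (K - 1))))) /\
  mim_gap w K beta (unif K) =
       exp (w * INR (K - 1) / INR K)
       - ((1 - beta) * exp (w * beta)
          + beta * exp (w * (1 - beta / INR (K - 1)))).
Proof.
  intros HK Hb Hw.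
  assert (HK2 : 2 <= INR K) by (apply (le_INR 2); lia).
  assert (Hexponent : w * INR (K - 1) / INR K = w * (1 - / INR K)).
  { rewrite minus_INR by lia. simpl INR. field. lra. }
  unfold mim_gap. rewrite Hexponent. split.
  - intros py Hpy.
    rewrite CMIM_symW by assumption.
    apply Rplus_le_compat_r, MIM_le_uniform; [lia|lra|].
    apply marg_dist; [assumption| |].
    + intros i j _ _. now apply symW_nonneg.
    + now apply rsum_symW_col_1.
  - rewrite CMIM_symW by (assumption || apply unif_dist; lia).
    f_equal. rewrite <- MIM_unif by lia.
    apply rsum_ext. intros i Hi.
    now rewrite marg_unif by (apply rsum_symW_row_1; assumption).
Qed.
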